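(* Let $n\ge 2$ and let $X^n=\{x_1,\dots,x_n\}$ be the fence of $n$ points, i.e. the poset whose strict order relations are exactly $x_i<x_{i+1}$ for odd $i$ and $x_i>x_{i+1}$ for even $i$ ($1\le i\le n-1$), so $x_1<x_2>x_3<x_4>\cdots$. Then $\det(X^n_M-\lambda I)=(-1)^n\lambda(\lambda-(n-2))(\lambda+1)^{n-2}$.
   Context: For a finite poset $X=\{x_1,\dots,x_n\}$, $X_M=(x_{i,j})$ is the $n\times n$ matrix with $x_{i,j}=0$ if $x_i\le x_j$ and $x_{i,j}=1$ otherwise. The characteristic polynomial is taken as $p_X(\lambda)=\det(X_M-\lambda I)$. *)

From mathcomp Require Import all_boot all_order all_algebra.
Set Implicit Arguments. Unset Strict Implicit. Unset Printing Implicit Defensive.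
Import GRing.Theory.
Local Open Scope ring_scope.

Definition poset_matrix (R : nzRingType) n (le : rel 'I_n) : 'M[R]_n :=
  \matrix_(i, j) (if le i j then 0 else 1).

(* The fence on n points, 0-indexed: x_i (0-based) corresponds to x_{i+1} in the
   paper.  Strict relations: x_k < x_{k+1} for odd 1-based k, x_k > x_{k+1} for even
   1-based k, i.e. the upper element of each adjacent pair is the one with odd
   0-based index.  Since the fence has height 2, x_i <= x_j iff i = j or
   (i, j adjacent and j has odd 0-based index). *)
Definition fence_le n : rel 'I_n :=
  fun i j => (i == j) || (odd (val j) && (((val i).+1 == val j) || ((val j).+1 == val i))).

From mathcomp Require Import all_boot all_order all_algebra ring.
Set Implicit Arguments. Unset Strict Implicit. Unset Printing Implicit Defensive.
Import GRing.Theory.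
Local Open Scope ring_scope.

(* Put mu = lambda + 1, let B be the 0/1 matrix of the strict order and J the
   all-ones matrix, so that X_M - lambda I = -(mu I + B - J).  With 0-based
   indices B is supported on (even, odd) pairs, hence B^2 = 0 and
   (mu + B)(mu - B) = mu^2; splitting B into its lower and upper parts L, U,
   which satisfy L U = 0, also gives det (mu - B) = mu^n.  The matrix
   determinant lemma for the rank-one J then yields
   det (mu + B - J) = mu^(n-2) (mu^2 - 1^T (mu - B) 1), and
   1^T (mu - B) 1 = n mu - (n - 1) since the fence has n - 1 cover relations;
   finally mu^2 - n mu + n - 1 = lambda (lambda - (n - 2)). *)

Section RankOneUpdate.
Variables (R : comNzRingType) (n : nat).

Lemma det_scalar_sub_rank1 (a : R) (u : 'cV[R]_n) (w : 'rV[R]_n) :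
  \det (a%:M - u *m w) * a = (a - (w *m u) 0 0) * a ^+ n.
Proof.
(* Both sides are det K * a, eliminating in K = [[1, w], [u, a]] in two ways. *)
set K := block_mx (1%:M : 'M_1) w u a%:M.
have eK1 : block_mx 1%:M 0 (- u) 1%:M *m K = block_mx 1%:M w 0 (a%:M - u *m w).
  by rewrite mulmx_block !mul1mx !mul0mx !addr0 mulmx1 addNr mulNmx addrC.
have eK2 : K *m block_mx a%:M 0 (- u) 1%:M = block_mx (a%:M - w *m u) w 0 a%:M.
  rewrite mulmx_block !mulmx0 !mulmx1 mul1mx !add0r mulmxN.
  by rewrite mul_mx_scalar mul_scalar_mx scalerN addrN.
have := congr1 determinant eK1; rewrite det_mulmx det_lblock !det1 !mul1r.
rewrite det_ublock det1 mul1r => <-.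
have := congr1 determinant eK2; rewrite det_mulmx det_lblock det_ublock det1 mulr1.
by rewrite !det_scalar expr1 det_mx11 !mxE eqxx mulr1n.
Qed.

Lemma det_sub_rank1 (a : R) (C Q : 'M[R]_n) (u : 'cV[R]_n) (v : 'rV[R]_n) :
  C *m Q = a%:M ->
  \det (C - u *m v) * \det Q * a = (a - (v *m Q *m u) 0 0) * a ^+ n.
Proof.
by move=> CQ; rewrite -det_mulmx mulmxBl CQ -[u *m v *m Q]mulmxA det_scalar_sub_rank1.
Qed.

End RankOneUpdate.

Lemma det_scalar_sub_strict_lower (R : comNzRingType) n (a : R) (L : 'M[R]_n) :
  (forall i j : 'I_n, (i <= j)%N -> L i j = 0) -> \det (a%:M - L) = a ^+ n.
Proof.
move=> L0; rewrite det_trig.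
  rewrite (eq_bigr (fun=> a)) ?prodr_const ?card_ord // => i _.
  by rewrite !mxE eqxx mulr1n L0 ?subr0.
apply/is_trig_mxP => i j lt_ij.
rewrite !mxE L0; last exact: ltnW.
by rewrite -val_eqE (ltn_eqF lt_ij) mulr0n subr0.
Qed.

Lemma mulmx_disjoint_supp (R : pzSemiRingType) m n p (P : pred 'I_n)
    (M : 'M[R]_(m, n)) (N : 'M[R]_(n, p)) :
    (forall i j, M i j != 0 -> P j) -> (forall j k, N j k != 0 -> ~~ P j) ->
  M *m N = 0.
Proof.
move=> PM PN; apply/matrixP => i k; rewrite !mxE big1 // => j _.
have [->|/PM Pj] := eqVneq (M i j) 0; first by rewrite mul0r.
have [->|/PN] := eqVneq (N j k) 0; first by rewrite mulr0.
by rewrite Pj.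
Qed.

Lemma mulmx_const1_sum (R : pzSemiRingType) m n (A : 'M[R]_(m, n)) :
  ((const_mx 1 : 'rV_m) *m A *m (const_mx 1 : 'cV_n)) 0 0 = \sum_i \sum_j A i j.
Proof.
rewrite mxE exchange_big; apply: eq_bigr => j _; rewrite !mxE mulr1.
by apply: eq_bigr => i _; rewrite mxE mul1r.
Qed.

Lemma sum_scalar_mx_entries (R : pzSemiRingType) n (a : R) :
  \sum_i \sum_j (a%:M : 'M_n) i j = a *+ n.
Proof.
rewrite -[n in RHS]card_ord -sumr_const; apply: eq_bigr => i _.
rewrite (bigD1 i) //= big1 => [|j /negPf]; rewrite mxE ?eqxx ?addr0 //.
by rewrite eq_sym => ->.
Qed.

Section Bipartite.
Variables (R : idomainType) (n : nat) (P : pred 'I_n) (B : 'M[R]_n).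
Hypothesis B_supp : forall i j, B i j != 0 -> ~~ P i && P j.

Lemma bipartite_mulmx_self : B *m B = 0.
Proof.
by apply: (mulmx_disjoint_supp (P := P)) => i j /B_supp /andP[].
Qed.

Lemma det_scalar_sub_bipartite (a : R) : a != 0 -> \det (a%:M - B) = a ^+ n.
Proof.
move=> a0.
pose L := \matrix_(i, j) if (j < i)%N then B i j else 0.
pose U := \matrix_(i, j) if (i < j)%N then B i j else 0.
have eB : B = L + U.
  apply/matrixP => i j; rewrite !mxE.
  case: ltngtP => [_|_|/val_inj <-]; rewrite ?addr0 ?add0r //.
  by apply/eqP; apply: contraT => /B_supp; rewrite andNb.
have LU0 : L *m U = 0.
  apply: (mulmx_disjoint_supp (P := P)) => i j; rewrite mxE.
    by case: ifP => [_ /B_supp /andP[]|_]; rewrite ?eqxx.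
  by case: ifP => [_ /B_supp /andP[]|_]; rewrite ?eqxx.
have dL : \det (a%:M - L) = a ^+ n.
  by apply: det_scalar_sub_strict_lower => i j le_ij; rewrite mxE ltnNge le_ij.
have dU : \det (a%:M - U) = a ^+ n.
  rewrite -det_tr linearB /= tr_scalar_mx.
  by apply: det_scalar_sub_strict_lower => i j le_ij; rewrite !mxE ltnNge le_ij.
have eLU : (a%:M - L) *m (a%:M - U) = a *: (a%:M - B).
  rewrite mulmxBl !mulmxBr LU0 subr0 -scalar_mxM mul_scalar_mx mul_mx_scalar.
  by rewrite eB scalerBr scalerDr scale_scalar_mx opprD addrA [RHS]addrAC.
apply: (mulfI (expf_neq0 n a0)).
by rewrite -detZ -eLU det_mulmx dL dU.
Qed.

Lemma det_bipartite_sub_rank1 (a : R) (u : 'cV[R]_n) (v : 'rV[R]_n) : a != 0 ->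
  \det (a%:M + B - u *m v) * a ^+ 2 = (a ^+ 2 - (v *m (a%:M - B) *m u) 0 0) * a ^+ n.
Proof.
move=> a0; apply: (mulIf (expf_neq0 n a0)).
have CQ : (a%:M + B) *m (a%:M - B) = (a ^+ 2)%:M.
  rewrite mulmxDl !mulmxBr bipartite_mulmx_self subr0.
  by rewrite -scalar_mxM mul_scalar_mx mul_mx_scalar subrK expr2.
have := det_sub_rank1 u v CQ; rewrite det_scalar_sub_bipartite // => key.
by rewrite mulrAC key -mulrA -exprD -exprM mul2n addnn.
Qed.

End Bipartite.

Definition fence_ltn (i j : nat) : bool := odd j && ((i.+1 == j) || (j.+1 == i)).

Lemma fence_ltnn i : fence_ltn i i = false.
Proof. by rewrite /fence_ltn gtn_eqF // orbF andbF. Qed.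

Lemma fence_ltn_parity i j : fence_ltn i j -> ~~ odd i && odd j.
Proof.
by case/andP=> oj /orP[]/eqP eij; rewrite oj andbT; move: oj; rewrite -eij /= ?negbK.
Qed.

Lemma fence_ltn_last_col i n : (i < n)%N -> fence_ltn i n = odd n && (i.+1 == n).
Proof. by move=> lt_in; rewrite /fence_ltn (gtn_eqF (leqW lt_in)) orbF. Qed.

Lemma fence_ltn_last_row i n : (i < n)%N -> fence_ltn n i = odd i && (i.+1 == n).
Proof. by move=> lt_in; rewrite /fence_ltn (gtn_eqF (leqW lt_in)). Qed.

Lemma sum_ord_succ_eq (b : nat -> bool) n :
  (\sum_(i < n) (b i && (i.+1 == n)))%N = (0 < n)%N && b n.-1.
Proof.
case: n => [|n]; first by rewrite big_ord0.
rewrite big_ord_recr /= eqxx andbT big1 // => i _.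
by rewrite eqSS ltn_eqF ?andbF.
Qed.

Lemma fence_ltn_count n : (\sum_(i < n) \sum_(j < n) fence_ltn i j)%N = n.-1.
Proof.
elim: n => [|n IH]; first by rewrite big_ord0.
rewrite big_ord_recr /= big_ord_recr /= fence_ltnn addn0.
rewrite (eq_bigr (fun i : 'I_n => \sum_(j < n) fence_ltn i j + fence_ltn i n)%N);
  last by move=> i _; rewrite big_ord_recr.
rewrite big_split /= IH.
under eq_bigr => i _ do rewrite fence_ltn_last_col //.
under [X in (_ + X)%N]eq_bigr => i _ do rewrite fence_ltn_last_row //.
rewrite (sum_ord_succ_eq (fun=> odd n)) sum_ord_succ_eq.
by case: n {IH} => [|n] //=; rewrite -addnA addn_negb addn1.
Qed.

Definition fence_lt_mx (R : nzRingType) n : 'M[R]_n := \matrix_(i, j) (fence_ltn i j)%:R.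

Lemma map_poset_matrix (R S : nzRingType) (f : {rmorphism R -> S}) n (le : rel 'I_n) :
  map_mx f (poset_matrix R le) = poset_matrix S le.
Proof.
by apply/matrixP => i j; rewrite !mxE; case: (le i j); rewrite ?rmorph0 ?rmorph1.
Qed.

Lemma poset_matrix_fence (R : nzRingType) n :
  poset_matrix R (@fence_le n) = const_mx 1 - 1%:M - fence_lt_mx R n.
Proof.
apply/matrixP => i j; rewrite !mxE /fence_le -[odd _ && _]/(fence_ltn i j).
have [<-|_] := eqVneq i j; first by rewrite fence_ltnn mulr1n subrr subr0.
by case: (fence_ltn i j); rewrite mulr0n subr0 ?subrr ?subr0.
Qed.

Lemma fence_lt_mx_supp (R : nzRingType) n (i j : 'I_n) :
  fence_lt_mx R n i j != 0 -> ~~ odd i && odd j.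
Proof.
by rewrite mxE; case: (boolP (fence_ltn i j)) => [/fence_ltn_parity|_]; rewrite ?eqxx.
Qed.

Lemma sum_fence_lt_mx (R : nzRingType) n : \sum_i \sum_j fence_lt_mx R n i j = n.-1%:R.
Proof.
rewrite -fence_ltn_count natr_sum; apply: eq_bigr => i _.
by rewrite natr_sum; apply: eq_bigr => j _; rewrite mxE.
Qed.

Lemma const1_mulmx_fence (R : nzRingType) n (a : R) :
  ((const_mx 1 : 'rV_n) *m (a%:M - fence_lt_mx R n) *m (const_mx 1 : 'cV_n)) 0 0
  = a *+ n - n.-1%:R.
Proof.
rewrite mulmx_const1_sum -sum_fence_lt_mx -sum_scalar_mx_entries -sumrB.
by apply: eq_bigr => i _; rewrite -sumrB; apply: eq_bigr => j _; rewrite !mxE.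
Qed.

Theorem mainTheorem14 (n : nat) (hn : (2 <= n)%N) :
  \det (map_mx (@polyC int) (poset_matrix int (@fence_le n)) - 'X%:M)
  = (-1) ^+ n * 'X * ('X - (n - 2)%:R%:P) * ('X + 1) ^+ (n - 2).
Proof.
case: n hn => [|[|m]] // _; rewrite subn2 /=.
set mu : {poly int} := 'X + 1.
have mu0 : mu != 0 by rewrite /mu -polyC1 monic_neq0 ?monicXaddC.
set B := fence_lt_mx {poly int} m.+2.
pose u : 'cV[{poly int}]_m.+2 := const_mx 1.
pose v : 'rV[{poly int}]_m.+2 := const_mx 1.
have eM : map_mx (@polyC int) (poset_matrix int (@fence_le m.+2)) - 'X%:M
          = - (mu%:M + B - u *m v).
  rewrite map_poset_matrix poset_matrix_fence.
  by apply/matrixP => i j; rewrite !mxE big_ord1 !mxE mul1r /mu; ring.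
have dK : \det (mu%:M + B - u *m v) = (mu ^+ 2 - (mu *+ m.+2 - m.+1%:R)) * mu ^+ m.
  apply: (mulIf (expf_neq0 2 mu0)).
  rewrite (det_bipartite_sub_rank1 (@fence_lt_mx_supp _ _)) // const1_mulmx_fence.
  by rewrite -mulrA -exprD addn2.
by rewrite eM -scaleN1r detZ dK polyC_natr /mu; ring.
Qed.
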